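(* Let $S$ be a modular lattice of finite length and let $(L_x)_{x\in S}$, $(\varphi_{yx})_{x\prec y}$ be a locally $S$-connected system. For $x<y$ in $S$ and a maximal chain $x=x_0\prec x_1\prec\cdots\prec x_n=y$, put $\varphi_{yx}:=\varphi_{x_nx_{n-1}}\circ\cdots\circ\varphi_{x_2x_1}\circ\varphi_{x_1x_0}$ (composition of partial maps), and put $\varphi_{xx}=\mathrm{id}_{L_x}$. Then $\varphi_{yx}$ does not depend on the choice of the maximal chain, and the lattices $L_x$ ($x\in S$) together with the maps $\varphi_{yx}$ ($x\le y$) form an $S$-connected system.
   Context: A \emph{partial bijection} $\varphi$ from a set $A$ to a set $B$ is a bijection from a subset $\operatorname{dom}\varphi\subseteq A$ onto a subset $\operatorname{im}\varphi\subseteq B$ (possibly empty); composites $\psi\circ\varphi$ of partial maps are defined at $a$ iff $a\in\operatorname{dom}\varphi$ and $\varphi(a)\in\operatorname{dom}\psi$, and equality of partial maps means equal domains and equal values. $x\prec y$ means $y$ covers $x$. For a modular lattice $S$ of finite length, a \emph{locally $S$-connected system} consists of lattices $L_x$ ($x\in S$) of finite length and partial bijections $\varphi_{yx}$ from $L_x$ to $L_y$ for all $x\prec y$ in $S$ such that for all $u,v,x,y\in S$ with $u\prec v$ and $x\wedge y\prec x$, $x\wedge y\prec y$, $x\prec x\vee y$, $y\prec x\vee y$: (22) $\varphi_{vu}$ is a lattice isomorphism from a nonempty filter of $L_u$ onto an ideal of $L_v$; (23) $\varphi_{(x\vee y)x}\circ\varphi_{x(x\wedge y)}=\varphi_{(x\vee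 y)y}\circ\varphi_{y(x\wedge y)}$, and this common partial map is denoted $\varphi_{(x\vee y)(x\wedge y)}$; (24) $\operatorname{im}\varphi_{(x\vee y)x}\cap\operatorname{im}\varphi_{(x\vee y)y}\subseteq\operatorname{im}\varphi_{(x\vee y)(x\wedge y)}$; (24$^\delta$) $\operatorname{dom}\varphi_{x(x\wedge y)}\cap\operatorname{dom}\varphi_{y(x\wedge y)}\subseteq\operatorname{dom}\varphi_{(x\vee y)(x\wedge y)}$. For a lattice $S$ of finite length, an \emph{$S$-connected system} consists of lattices $L_x$ ($x\in S$) of finite length and partial bijections $\varphi_{yx}$ from $L_x$ to $L_y$ for all $x\le y$ in $S$ such that for all $x,y\in S$: (17) if $\varphi_{yx}\ne\emptyset$ then $\operatorname{dom}\varphi_{yx}$ is a filter of $L_x$, $\operatorname{im}\varphi_{yx}$ is an ideal of $L_y$ and $\varphi_{yx}$ is a lattice isomorphism between them; $\varphi_{xx}=\mathrm{id}_{L_x}$; (18) if $x\prec y$ then $\varphi_{yx}\ne\emptyset$; (19) for $x\le z\le y$: $\varphi_{yx}=\varphi_{yz}\circ\varphi_{zx}$; (20) $\operatorname{im}\varphi_{(x\vee y)x}\cap\operatorname{im}\varphi_{(x\vee y)y}\subseteq\operatorname{im}\varphi_{(x\vee y)(x\wedge y)}$; (20$^\delta$) $\operatorname{dom}\varphi_{x(x\wedge y)}\cap\operatorname{dom}\varphi_{y(x\wedge y)}\subseteq\operatorname{dom}\varphi_{(x\vee y)(x\wedge y)}$. *)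

From HB Require Import structures.
From mathcomp Require Import all_boot all_order.
Set Implicit Arguments.
Unset Strict Implicit.
Unset Printing Implicit Defensive.
Import Order.Theory.
Local Open Scope order_scope.

Definition modular_lattice {d} (T : latticeType d) : Prop :=
  forall x y z : T, x <= z -> x `|` (y `&` z) = (x `|` y) `&` z.

Definition finite_length {d} (T : porderType d) : Prop :=
  exists n : nat, forall s : seq T, sorted <%O s -> (size s <= n)%N.

Definition covers {d} {T : porderType d} (x y : T) : Prop :=
  x < y /\ (forall z : T, x < z -> z < y -> False).

(* filters / ideals, possibly empty *)
Definition is_filter {d} {T : latticeType d} (P : T -> Prop) : Prop :=
  (forall a b : T, P a -> a <= b -> P b) /\
  (forall a b : T, P a -> P b -> P (a `&` b)).

Definition is_ideal {d} {T : latticeType d} (P : T -> Prop) : Prop :=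
  (forall a b : T, P b -> a <= b -> P a) /\
  (forall a b : T, P a -> P b -> P (a `|` b)).

Definition pdom {A B : Type} (f : A -> option B) (a : A) : Prop := f a <> None.
Definition pim {A B : Type} (f : A -> option B) (b : B) : Prop :=
  exists a, f a = Some b.
Definition pcomp {A B C : Type} (g : B -> option C) (f : A -> option B) :
  A -> option C := fun a => obind g (f a).
Definition pinjective {A B : Type} (f : A -> option B) : Prop :=
  forall a1 a2 b, f a1 = Some b -> f a2 = Some b -> a1 = a2.
Definition pempty {A B : Type} (f : A -> option B) : Prop :=
  forall a, f a = None.

Definition plattice_iso {d1 d2} {A : latticeType d1} {B : latticeType d2}
  (f : A -> option B) : Prop :=
  pinjective f /\
  (forall a1 a2 b1 b2, f a1 = Some b1 -> f a2 = Some b2 ->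
     f (a1 `&` a2) = Some (b1 `&` b2) /\ f (a1 `|` a2) = Some (b1 `|` b2)).

Definition filter_ideal_iso {d1 d2} {A : latticeType d1} {B : latticeType d2}
  (f : A -> option B) : Prop :=
  is_filter (pdom f) /\ is_ideal (pim f) /\ plattice_iso f.

Section Systems.
Variables (d : Order.disp_t) (S : latticeType d) (dL : S -> Order.disp_t).
Variable L : forall x : S, latticeType (dL x).

Definition diamond (x y : S) : Prop :=
  covers (x `&` y) x /\ covers (x `&` y) y /\ covers x (x `|` y) /\ covers y (x `|` y).

(* phi y x : L x -> option (L y) is  φ_{yx}; only used for x ≺ y *)
Definition locally_connected_system (phi : forall y x : S, L x -> option (L y)) : Prop :=
  (forall x, finite_length (L x)) /\
  (forall u v : S, covers u v ->
     (exists a, pdom (phi v u) a) /\ filter_ideal_iso (phi v u)) /\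
  (* (23) *)
  (forall x y : S, diamond x y ->
     pcomp (phi (x `|` y) x) (phi x (x `&` y)) =1
     pcomp (phi (x `|` y) y) (phi y (x `&` y))) /\
  (* (24) *)
  (forall x y : S, diamond x y -> forall b,
     pim (phi (x `|` y) x) b -> pim (phi (x `|` y) y) b ->
     pim (pcomp (phi (x `|` y) x) (phi x (x `&` y))) b) /\
  (* (24^delta) *)
  (forall x y : S, diamond x y -> forall a,
     pdom (phi x (x `&` y)) a -> pdom (phi y (x `&` y)) a ->
     pdom (pcomp (phi (x `|` y) x) (phi x (x `&` y))) a).

(* Phi y x : L x -> option (L y) is φ_{yx}; only used for x <= y *)
Definition connected_system (Phi : forall y x : S, L x -> option (L y)) : Prop :=
  (forall x, finite_length (L x)) /\
  (forall x y : S, x <= y -> pinjective (Phi y x)) /\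
  (forall x y : S, x <= y -> ~ pempty (Phi y x) -> filter_ideal_iso (Phi y x)) /\
  (forall x : S, Phi x x =1 (fun a => Some a)) /\
  (forall x y : S, covers x y -> ~ pempty (Phi y x)) /\
  (forall x z y : S, x <= z -> z <= y -> Phi y x =1 pcomp (Phi y z) (Phi z x)) /\
  (* (20) *)
  (forall x y : S, forall b,
     pim (Phi (x `|` y) x) b -> pim (Phi (x `|` y) y) b ->
     pim (Phi (x `|` y) (x `&` y)) b) /\
  (* (20^delta) *)
  (forall x y : S, forall a,
     pdom (Phi x (x `&` y)) a -> pdom (Phi y (x `&` y)) a ->
     pdom (Phi (x `|` y) (x `&` y)) a).

End Systems.

Inductive mchain {d} {S : porderType d} : S -> S -> Type :=
| mch_nil (x : S) : mchain x x
| mch_cons (x y z : S) : covers x y -> mchain y z -> mchain x z.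

Fixpoint chain_comp {d} {S : porderType d} {T : S -> Type}
  (phi : forall y x : S, T x -> option (T y)) (x z : S) (c : mchain x z)
  : T x -> option (T z) :=
  match c in mchain x z return T x -> option (T z) with
  | mch_nil x => fun a => Some a
  | mch_cons x y z _ c' => pcomp (chain_comp phi c') (phi y x)
  end.

Arguments diamond {d S} x y.
Arguments locally_connected_system {d S dL} L phi.
Arguments connected_system {d S dL} L Phi.

From HB Require Import structures.
From mathcomp Require Import all_boot all_order.
From Stdlib Require Import Classical ClassicalEpsilon FunctionalExtensionality.
Import Order.Theory.
Local Open Scope order_scope.
Set Implicit Arguments.
Unset Strict Implicit.
Unset Printing Implicit Defensive.

(* The composite along a maximal chain does not depend on the chain: two maximal
   chains from x starting with distinct covers a, b of x can both be rerouted
   through a ∨ b, and by modularity a ∧ b = x ≺ a, b ≺ a ∨ b is a diamond, where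
   (23) lets one trade a for b.  All inductions run on the height of an interval,
   measured by a bound on the length of its strict chains.  For (20) and (20^δ), the square
   x ∧ y ≤ x, y ≤ x ∨ y is either a diamond, handled by (24) and (24^δ), or some
   x ∧ y < x' < x cuts it, by modularity, into the smaller squares (x', y) and
   (x, x' ∨ y), and the property glues along x' (for (20) because the composite
   maps are injective). *)

Lemma pcomp_SomeP {A B C : Type} {f : A -> option B} {g : B -> option C} {a c} :
  pcomp g f a = Some c <-> exists2 b, f a = Some b & g b = Some c.
Proof.
rewrite /pcomp; split; first by case: (f a) => //= b; exists b.
by case=> b ->.
Qed.

Section PartialMaps.
Variables A B C : Type.
Implicit Types (f : A -> option B) (g : B -> option C).

Lemma pcomp_ext f f' g g' : f =1 f' -> g =1 g' -> pcomp g f =1 pcomp g' f'.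
Proof. by move=> ef eg a; rewrite /pcomp ef; case: (f' a) => //= b; rewrite eg. Qed.

Lemma pcompA D f g (h : C -> option D) : pcomp h (pcomp g f) =1 pcomp (pcomp h g) f.
Proof. by move=> a; rewrite /pcomp; case: (f a). Qed.

Lemma pcomp_idl f : pcomp (fun b => Some b) f =1 f.
Proof. by move=> a; rewrite /pcomp; case: (f a). Qed.

Lemma pdom_pcompP f g a : pdom (pcomp g f) a <-> exists2 b, f a = Some b & pdom g b.
Proof.
rewrite /pdom /pcomp; split; first by case: (f a) => //= b; exists b.
by case=> b ->.
Qed.

Lemma pim_pcomp f g b c : pim f b -> g b = Some c -> pim (pcomp g f) c.
Proof. by case=> a fa gb; exists a; rewrite /pcomp fa. Qed.

Lemma pim_pcomp_inj A' f (f' : A' -> option B) g c : pinjective g ->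
  pim (pcomp g f) c -> pim (pcomp g f') c ->
  exists b, [/\ g b = Some c, pim f b & pim f' b].
Proof.
move=> g_inj [a /pcomp_SomeP [b fa gb]] [a' /pcomp_SomeP [b' fa' gb']].
by exists b; split=> //; [exists a | rewrite (g_inj _ _ _ gb gb'); exists a'].
Qed.

End PartialMaps.

Lemma plattice_iso_le d1 d2 (A : latticeType d1) (B : latticeType d2)
  (f : A -> option B) a1 a2 b1 b2 : plattice_iso f ->
  f a1 = Some b1 -> f a2 = Some b2 -> (a1 <= a2) = (b1 <= b2).
Proof.
move=> [f_inj f_hom] fa1 fa2; have [fI _] := f_hom _ _ _ _ fa1 fa2.
apply/idP/idP => le12.
  by move: fI; rewrite (meet_l le12) fa1 => -[->]; rewrite leIr.
by rewrite (meet_l le12) in fI; rewrite (f_inj _ _ _ fa1 fI) leIr.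
Qed.

Section FilterIdealIso.
Variables (d1 d2 d3 : Order.disp_t).
Variables (A : latticeType d1) (B : latticeType d2) (C : latticeType d3).
Implicit Types (f : A -> option B) (g : B -> option C).

Lemma filter_ideal_iso_id : filter_ideal_iso (fun a : A => Some a).
Proof.
split; last split; last split.
- by split.
- by split=> [a b _ _|a b _ _]; [exists a | exists (a `|` b)].
- by move=> a1 a2 b [->] [->].
- by move=> a1 a2 b1 b2 [->] [->].
Qed.

Lemma plattice_iso_pcomp f g :
  plattice_iso f -> plattice_iso g -> plattice_iso (pcomp g f).
Proof.
move=> [f_inj f_hom] [g_inj g_hom]; split.
  move=> a1 a2 c /pcomp_SomeP [b1 fa1 gb1] /pcomp_SomeP [b2 fa2 gb2].
  by move: fa2; rewrite -(g_inj _ _ _ gb1 gb2); exact: f_inj.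
move=> a1 a2 c1 c2 /pcomp_SomeP [b1 fa1 gb1] /pcomp_SomeP [b2 fa2 gb2].
have [fI fU] := f_hom _ _ _ _ fa1 fa2; have [gI gU] := g_hom _ _ _ _ gb1 gb2.
by rewrite /pcomp fI fU /= gI gU.
Qed.

Lemma is_filter_pdom_pcomp f g : is_filter (pdom f) -> plattice_iso f ->
  is_filter (pdom g) -> is_filter (pdom (pcomp g f)).
Proof.
move=> [f_up f_meet] f_iso [g_up g_meet]; split.
  move=> a a' /pdom_pcompP [b fa gb] le_aa'.
  have: pdom f a' by apply: f_up le_aa'; rewrite /pdom fa.
  rewrite /pdom; case fa': (f a') => [b'|//] _.
  apply/pdom_pcompP; exists b' => //; apply: g_up gb _.
  by rewrite -(plattice_iso_le f_iso fa fa').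
move=> a1 a2 /pdom_pcompP [b1 fa1 gb1] /pdom_pcompP [b2 fa2 gb2].
apply/pdom_pcompP; exists (b1 `&` b2); last exact: g_meet.
by have [] := f_iso.2 _ _ _ _ fa1 fa2.
Qed.

Lemma is_ideal_pim_pcomp f g : is_ideal (pim f) -> plattice_iso f ->
  is_ideal (pim g) -> plattice_iso g -> is_ideal (pim (pcomp g f)).
Proof.
move=> [f_down _] f_iso [g_down _] g_iso; split.
  move=> c' c [a /pcomp_SomeP [b fa gb]] le_c'c.
  have [b' gb'] : pim g c' by apply: g_down le_c'c; exists b.
  have b'b : b' <= b by rewrite (plattice_iso_le g_iso gb' gb).
  have b'_im : pim f b' by apply: f_down b'b; exists a.
  exact: pim_pcomp b'_im gb'.
move=> c1 c2 [a1 /pcomp_SomeP [b1 fa1 gb1]] [a2 /pcomp_SomeP [b2 fa2 gb2]].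
have [_ fU] := f_iso.2 _ _ _ _ fa1 fa2; have [_ gU] := g_iso.2 _ _ _ _ gb1 gb2.
by exists (a1 `|` a2); rewrite /pcomp fU.
Qed.

Lemma filter_ideal_iso_pcomp f g :
  filter_ideal_iso f -> filter_ideal_iso g -> filter_ideal_iso (pcomp g f).
Proof.
move=> [f_dom [f_im f_iso]] [g_dom [g_im g_iso]]; split; last split.
- exact: is_filter_pdom_pcomp.
- exact: is_ideal_pim_pcomp.
- exact: plattice_iso_pcomp.
Qed.

End FilterIdealIso.

Section MaximalChains.
Variables (d : Order.disp_t) (S : porderType d).
Implicit Types x y z : S.

Fixpoint mchain_cat x y z (c1 : mchain x y) : mchain y z -> mchain x z :=
  match c1 in mchain x y return mchain y z -> mchain x z with
  | mch_nil _ => id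
  | mch_cons _ _ _ xy c => fun c2 => mch_cons xy (mchain_cat c c2)
  end.

Lemma mchain_le x y : mchain x y -> x <= y.
Proof. by elim=> // a b c [ab _] _; apply: le_trans (ltW ab). Qed.

Lemma chain_comp_cat (T : S -> Type) (phi : forall y x, T x -> option (T y))
    x y z (c1 : mchain x y) (c2 : mchain y z) :
  chain_comp phi (mchain_cat c1 c2) =1 pcomp (chain_comp phi c2) (chain_comp phi c1).
Proof.
elim: c1 c2 => [a|a b e _ c IH] c2 u //=.
by rewrite /pcomp; case: (phi b a u) => //= v; apply: IH.
Qed.

Lemma covers_between x y z : covers x y -> x <= z -> z <= y -> z = x \/ z = y.
Proof.
move=> [_ xy_min]; rewrite !le_eqVlt => /predU1P[-> | xz]; first by left.
case/predU1P => [-> | zy]; [by right | by case: (xy_min z)].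
Qed.

Lemma not_covers_between x y : x < y -> ~ covers x y -> exists2 z, x < z & z < y.
Proof.
move=> xy not_cov; apply: NNPP => no_z; apply: not_cov; split=> // z xz zy.
by apply: no_z; exists z.
Qed.

Definition bounded_interval (n : nat) x y :=
  forall s : seq S, sorted <%O s -> all (fun t => x <= t <= y) s -> (size s <= n)%N.

Lemma bounded_interval0 x y : x <= y -> ~ bounded_interval 0 x y.
Proof. by move=> xy /(_ [:: x] isT); rewrite /= lexx xy => /(_ isT). Qed.

Lemma bounded_interval_shrinkl n x y x' y' :
  bounded_interval n.+1 x y -> x < x' -> y' <= y -> bounded_interval n x' y'.
Proof.
move=> bnd xx' y'y [//|t s] sorted_s s_in.
have in_xy : all (fun u => x <= u <= y) (t :: s).
  apply: sub_all s_in => u /andP[x'u uy'].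
  by rewrite (le_trans (ltW xx') x'u) (le_trans uy' y'y).
have /andP[/andP[x't _] _] := s_in; have xt := lt_le_trans xx' x't.
have /andP[/andP[_ ty] _] := in_xy.
apply: (bnd (x :: t :: s)) => /=; first by rewrite xt.
by move: in_xy => /= ->; rewrite lexx (le_trans (ltW xt) ty).
Qed.

Lemma bounded_interval_shrinkr n x y x' y' :
  bounded_interval n.+1 x y -> x <= x' -> y' < y -> bounded_interval n x' y'.
Proof.
move=> bnd xx' y'y s sorted_s s_in.
have in_xy : all (fun u => x <= u <= y) s.
  apply: sub_all s_in => u /andP[x'u uy'].
  by rewrite (le_trans xx' x'u) (le_trans uy' (ltW y'y)).
have lt_y : all (<%O^~ y) s.
  by apply: sub_all s_in => u /andP[_ uy']; apply: le_lt_trans uy' y'y.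
case: s sorted_s s_in in_xy lt_y => [//|t s] sorted_s s_in in_xy lt_y.
have /andP[/andP[xt ty] _] := in_xy.
rewrite -ltnS -(size_rcons (t :: s) y); apply: bnd.
  by rewrite (sorted_pairwise lt_trans) pairwise_rcons -(sorted_pairwise lt_trans) sorted_s lt_y.
by rewrite all_rcons in_xy lexx (le_trans xt ty).
Qed.

Lemma mchain_exists n x y : bounded_interval n x y -> x <= y -> inhabited (mchain x y).
Proof.
elim: n x y => [|n IH] x y bnd xy; first by case: (bounded_interval0 xy bnd).
case: (eqVneq x y) => [<- | x_neq_y]; first exact: inhabits (mch_nil x).
have x_lt_y : x < y by rewrite lt_neqAle x_neq_y.
case: (classic (covers x y)) => [cov | not_cov].
  exact: inhabits (mch_cons cov (mch_nil y)).
have [z xz zy] := not_covers_between x_lt_y not_cov.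
have [c1] := IH x z (bounded_interval_shrinkr bnd (lexx x) zy) (ltW xz).
have [c2] := IH z y (bounded_interval_shrinkl bnd xz (lexx y)) (ltW zy).
exact: inhabits (mchain_cat c1 c2).
Qed.

Lemma finite_length_bounded_interval :
  finite_length S -> exists n, forall x y, bounded_interval n x y.
Proof. by case=> n len_n; exists n => x y s sorted_s _; apply: len_n. Qed.

Lemma finite_length_mchain x y : finite_length S -> x <= y -> inhabited (mchain x y).
Proof. by case/finite_length_bounded_interval => n bnd; apply: mchain_exists (bnd x y). Qed.

End MaximalChains.

Section ModularLattice.
Variables (d : Order.disp_t) (S : latticeType d).
Implicit Types x y z : S.

Lemma covers_meet x y z : covers z x -> covers z y -> x != y -> x `&` y = z.
Proof.
move=> zx zy x_neq_y.
have z_le_xy : z <= x `&` y by rewrite lexI (ltW zx.1) (ltW zy.1).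
case: (covers_between zx z_le_xy (leIl x y)) => [-> // | /meet_idPl xy].
case: (covers_between zy (ltW zx.1) xy) => [xz | xy_eq].
  by have := zx.1; rewrite xz ltxx.
by rewrite xy_eq eqxx in x_neq_y.
Qed.

Hypothesis S_modular : modular_lattice S.

Lemma covers_join x y : covers (x `&` y) x -> covers y (x `|` y).
Proof.
move=> cov; split.
  rewrite lt_neqAle leUr andbT; apply: contraTneq cov.1 => yE.
  have /meet_idPl -> : x <= y by rewrite yE leUl.
  by rewrite ltxx.
move=> z yz zj.
case: (covers_between cov (leI2 (lexx x) (ltW yz)) (leIl x z)) => [xzE | /meet_idPl xz].
  have := @S_modular y x z (ltW yz); rewrite xzE (join_l (leIr y x)) joinC.
  by rewrite (meet_r (ltW zj)) => zE; move: yz; rewrite -zE ltxx.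
have jz : x `|` y <= z by rewrite leUx xz (ltW yz).
by have := lt_le_trans zj jz; rewrite ltxx.
Qed.

Lemma diamond_covers x y : covers (x `&` y) x -> covers (x `&` y) y -> diamond x y.
Proof.
move=> cov_x cov_y; do 2!split=> //; split; last exact: covers_join.
by rewrite joinC; apply: covers_join; rewrite meetC.
Qed.

Lemma modular_glue x y x' : x `&` y <= x' -> x' <= x ->
  [/\ x' `&` y = x `&` y, x `&` (x' `|` y) = x' & x `|` (x' `|` y) = x `|` y].
Proof.
move=> mx' x'x; split.
- by apply/eqP; rewrite eq_le leI2 //= lexI mx' leIr.
- have yx_x' : y `&` x <= x' by rewrite meetC.
  by rewrite meetC -(@S_modular x' y x x'x) (join_l yx_x').
- by rewrite joinA (join_l x'x).
Qed.

Hypothesis S_finite : finite_length S.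

Lemma square_ind (P : S -> S -> Prop) :
  (forall x y, P x y -> P y x) ->
  (forall x y, x <= y -> P x y) ->
  (forall x y, diamond x y -> P x y) ->
  (forall x y x', x `&` y < x' -> x' < x -> P x' y -> P x (x' `|` y) -> P x y) ->
  forall x y, P x y.
Proof.
move=> P_sym P_le P_diamond P_glue x y.
have [n bnd] := finite_length_bounded_interval S_finite.
move: (bnd (x `&` y) (x `|` y)) => {bnd}.
elim: n x y => [|n IH] x y bnd.
  by case: (bounded_interval0 (le_trans (leIl x y) (leUl x y)) bnd).
have glue x1 y1 x' : bounded_interval n.+1 (x1 `&` y1) (x1 `|` y1) ->
    x1 `&` y1 < x' -> x' < x1 -> P x1 y1.
  move=> bnd1 mx' x'x1.
  have [x'y_meet x_meet x_join] := modular_glue (ltW mx') (ltW x'x1).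
  apply: (P_glue _ _ _ mx' x'x1); apply: IH.
    rewrite x'y_meet; apply: bounded_interval_shrinkr bnd1 (lexx _) _.
    rewrite lt_neqAle (leU2 (ltW x'x1) (lexx y1)) andbT; apply: contraTneq x'x1 => jE.
    by rewrite -x_meet jE (meet_l (leUl _ _)) ltxx.
  by rewrite x_meet x_join; apply: bounded_interval_shrinkl bnd1 mx' (lexx _).
case: (boolP (x <= y)) => [/P_le // | x_nle_y].
case: (boolP (y <= x)) => [/P_le/P_sym // | y_nle_x].
have m_lt_x : x `&` y < x.
  by rewrite lt_neqAle leIl andbT; apply: contra x_nle_y => /eqP/meet_idPl.
have m_lt_y : x `&` y < y.
  by rewrite lt_neqAle leIr andbT; apply: contra y_nle_x => /eqP/meet_idPr.
case: (classic (covers (x `&` y) x)) => [cov_x | ncov_x]; last first.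
  by have [x' mx' x'x] := not_covers_between m_lt_x ncov_x; apply: glue bnd mx' x'x.
case: (classic (covers (x `&` y) y)) => [cov_y | ncov_y]; last first.
  have [y' my' y'y] := not_covers_between m_lt_y ncov_y.
  by apply/P_sym/(glue y x y'); rewrite // meetC // joinC.
exact/P_diamond/diamond_covers.
Qed.

End ModularLattice.

Section ConnectedSystem.
Variables (d : Order.disp_t) (S : latticeType d) (dL : S -> Order.disp_t).
Variables (L : forall x : S, latticeType (dL x)) (phi : forall y x : S, L x -> option (L y)).
Arguments phi : clear implicits.
Implicit Types x y z : S.
Hypotheses (S_modular : modular_lattice S) (S_finite : finite_length S).
Hypothesis phi_diamond : forall x y, diamond x y ->
  pcomp (phi (x `|` y) x) (phi x (x `&` y)) =1 pcomp (phi (x `|` y) y) (phi y (x `&` y)).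

Lemma chain_comp_nil x y (c : mchain x y) : ~ x < y ->
  exists e : x = y, forall a, chain_comp phi c a = Some (eq_rect x L a y e).
Proof.
case: c => [z | z a w za c] not_lt; first by exists erefl.
by case: not_lt; apply: lt_le_trans za.1 (mchain_le c).
Qed.

Lemma chain_comp_refl x (c : mchain x x) : chain_comp phi c =1 (fun a => Some a).
Proof.
move=> a; have [|e ->] := chain_comp_nil c; first by rewrite ltxx.
by rewrite (eq_irrelevance e erefl).
Qed.

Lemma chain_comp_indep x y (c1 c2 : mchain x y) : chain_comp phi c1 =1 chain_comp phi c2.
Proof.
have [n bnd] := finite_length_bounded_interval S_finite.
move: (bnd x y) => {bnd}.
elim: n x y c1 c2 => [|n IH] x y c1 c2 bnd.
  by case: (bounded_interval0 (mchain_le c1) bnd).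
case: c1 c2 bnd => [x0 | x0 a y0 xa c1] c2 bnd.
  by move=> u; rewrite (chain_comp_refl c2).
case: c2 xa c1 bnd => [z | z b w xb c2] xa c1 bnd.
  by have := lt_le_trans xa.1 (mchain_le c1); rewrite ltxx.
have IHa := IH _ _ _ _ (bounded_interval_shrinkl bnd xa.1 (lexx w)).
have IHb := IH _ _ _ _ (bounded_interval_shrinkl bnd xb.1 (lexx w)).
case: (eqVneq a b) => [eq_ab | neq_ab].
  by subst b; apply: pcomp_ext => // u; apply: IHa.
have ab_meet := covers_meet xa xb neq_ab.
have cov_ab : covers (a `&` b) a /\ covers (a `&` b) b by rewrite ab_meet.
have dab := diamond_covers S_modular cov_ab.1 cov_ab.2.
have [_ [_ [aj bj]]] := dab.
have := phi_diamond dab; rewrite ab_meet => diamond_eq.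
have jw : a `|` b <= w by rewrite leUx (mchain_le c1) (mchain_le c2).
have [c] := finite_length_mchain S_finite jw.
move=> u /=.
transitivity (pcomp (chain_comp phi c) (pcomp (phi (a `|` b) a) (phi a z)) u).
  by rewrite pcompA; apply: pcomp_ext => // v; apply: (IHa c1 (mch_cons aj c)).
transitivity (pcomp (chain_comp phi c) (pcomp (phi (a `|` b) b) (phi b z)) u).
  exact: pcomp_ext.
by rewrite pcompA; apply: pcomp_ext => // v; apply: (IHb (mch_cons bj c) c2).
Qed.

(* There is no maximal chain from x to y unless x <= y; Phi y x is then empty. *)
Definition Phi y x : L x -> option (L y) :=
  match excluded_middle_informative (inhabited (mchain x y)) with
  | left ch => chain_comp phi (epsilon ch (fun _ => True))
  | right _ => fun _ => None
  end.
Arguments Phi : clear implicits.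

Lemma PhiE x y (c : mchain x y) : Phi y x =1 chain_comp phi c.
Proof.
rewrite /Phi; case: excluded_middle_informative => [ch | []]; last exact: inhabits c.
exact: chain_comp_indep.
Qed.

Lemma Phi_id x : Phi x x =1 (fun a => Some a).
Proof. exact: PhiE (mch_nil x). Qed.

Lemma Phi_covers x y : covers x y -> Phi y x = phi y x.
Proof.
move=> xy; apply: functional_extensionality => a.
by rewrite (PhiE (mch_cons xy (mch_nil y))) /= pcomp_idl.
Qed.

Lemma Phi_trans x z y : x <= z -> z <= y -> Phi y x = pcomp (Phi y z) (Phi z x).
Proof.
move=> xz zy; have [c1] := finite_length_mchain S_finite xz.
have [c2] := finite_length_mchain S_finite zy.
apply: functional_extensionality => a.
rewrite (PhiE (mchain_cat c1 c2)) chain_comp_cat.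
exact: pcomp_ext (fsym (PhiE c1)) (fsym (PhiE c2)) a.
Qed.

Hypothesis phi_filter_ideal_iso : forall x y, covers x y -> filter_ideal_iso (phi y x).

Lemma filter_ideal_iso_Phi x y : x <= y -> filter_ideal_iso (Phi y x).
Proof.
move=> xy; have [c] := finite_length_mchain S_finite xy.
rewrite (functional_extensionality _ _ (PhiE c)).
elim: c {xy} => [z | z a w za c IH] /=; first exact: filter_ideal_iso_id.
exact: filter_ideal_iso_pcomp (phi_filter_ideal_iso za) IH.
Qed.

Hypothesis phi_im_diamond : forall x y, diamond x y -> forall b,
  pim (phi (x `|` y) x) b -> pim (phi (x `|` y) y) b ->
  pim (pcomp (phi (x `|` y) x) (phi x (x `&` y))) b.

Lemma Phi_im_meet x y b :
  pim (Phi (x `|` y) x) b -> pim (Phi (x `|` y) y) b -> pim (Phi (x `|` y) (x `&` y)) b.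
Proof.
move: x y b; apply: (square_ind S_modular S_finite).
- by move=> x y IH; rewrite meetC joinC => b hy hx; apply: IH.
- by move=> x y xy; rewrite (meet_l xy) (join_r xy).
- move=> x y dxy b; case: (dxy) => cov_x [cov_y [cov_xj cov_yj]].
  rewrite (Phi_trans (leIl x y) (leUl x y)) !Phi_covers //.
  exact: phi_im_diamond dxy b.
move=> x y x' mx' x'x IH1 IH2 b hx hy.
have [x'y_meet x_meet x_join] := modular_glue S_modular (ltW mx') (ltW x'x).
rewrite x'y_meet in IH1; rewrite x_meet x_join in IH2.
have kj : x' `|` y <= x `|` y by rewrite leU2 // ltW.
rewrite (Phi_trans (leUr y x') kj) in hy.
have hk : pim (Phi (x `|` y) (x' `|` y)) b.
  by case: hy => a /pcomp_SomeP [c _ kc]; exists c.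
have := IH2 b hx hk; rewrite (Phi_trans (leUl x' y) kj) => hx'.
have k_inj := (filter_ideal_iso_Phi kj).2.2.1.
have [c [kc hcx' hcy]] := pim_pcomp_inj k_inj hx' hy.
rewrite (Phi_trans (le_trans (ltW mx') (leUl x' y)) kj).
exact: pim_pcomp (IH1 c hcx' hcy) kc.
Qed.

Hypothesis phi_dom_diamond : forall x y, diamond x y -> forall a,
  pdom (phi x (x `&` y)) a -> pdom (phi y (x `&` y)) a ->
  pdom (pcomp (phi (x `|` y) x) (phi x (x `&` y))) a.

Lemma Phi_dom_join x y a :
  pdom (Phi x (x `&` y)) a -> pdom (Phi y (x `&` y)) a -> pdom (Phi (x `|` y) (x `&` y)) a.
Proof.
move: x y a; apply: (square_ind S_modular S_finite).
- by move=> x y IH; rewrite meetC joinC => a hy hx; apply: IH.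
- by move=> x y xy; rewrite (meet_l xy) (join_r xy).
- move=> x y dxy a; case: (dxy) => cov_x [cov_y [cov_xj cov_yj]].
  rewrite (Phi_trans (leIl x y) (leUl x y)) !Phi_covers //.
  exact: phi_dom_diamond dxy a.
move=> x y x' mx' x'x IH1 IH2 a hx hy.
have [x'y_meet x_meet x_join] := modular_glue S_modular (ltW mx') (ltW x'x).
rewrite x'y_meet in IH1; rewrite x_meet x_join in IH2.
have x'j : x' <= x `|` y by rewrite (le_trans (ltW x'x)) ?leUl.
rewrite (Phi_trans (ltW mx') (ltW x'x)) in hx.
case/pdom_pcompP: hx => c ac hc.
have a_dom : pdom (Phi x' (x `&` y)) a by rewrite /pdom ac.
have := IH1 a a_dom hy.
rewrite (Phi_trans (ltW mx') (leUl x' y)) => /pdom_pcompP[c' ac' hc'].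
have c'E : c' = c by move: ac'; rewrite ac => -[].
rewrite c'E in hc'.
rewrite (Phi_trans (ltW mx') x'j); apply/pdom_pcompP; exists c => //.
exact: IH2.
Qed.

End ConnectedSystem.

Theorem theorem4p3 (d : Order.disp_t) (S : latticeType d)
  (dL : S -> Order.disp_t) (L : forall x : S, latticeType (dL x))
  (phi : forall y x : S, L x -> option (L y)) :
  modular_lattice S -> finite_length S ->
  locally_connected_system L phi ->
  exists Phi : forall y x : S, L x -> option (L y),
    (forall (x y : S) (c : mchain x y), Phi y x =1 chain_comp phi c) /\
    connected_system L Phi.
Proof.
move=> S_modular S_finite [L_finite [phi_covers [phi_diamond [phi_im phi_dom]]]].
have phi_fii x y (xy : covers x y) := (phi_covers x y xy).2.
have fii_Phi := filter_ideal_iso_Phi S_modular S_finite phi_diamond phi_fii.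
exists (Phi phi); split; first exact: PhiE.
split; first exact: L_finite.
split; first by move=> x y /fii_Phi [_ [_ []]].
split; first by move=> x y xy _; apply: fii_Phi.
split; first exact: Phi_id.
split.
  move=> x y xy empty; have [[a a_dom] _] := phi_covers x y xy.
  by apply: a_dom; rewrite -(Phi_covers S_modular S_finite phi_diamond xy).
split; first by move=> x z y xz zy; rewrite (Phi_trans S_modular S_finite phi_diamond xz zy).
split; first exact: Phi_im_meet.
exact: Phi_dom_join.
Qed.
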